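(* Let $\mathbf{F}\in\{\mathbf{R},\mathbf{C}\}$, $x_*\in\mathbf{F}^d$, and let $A_1,\dots,A_n\in\mathbf{H}_d$ be positive semidefinite, with exact measurements $y=\mathcal{A}(x_*x_*^* )$. For an integer $p\ge1$ consider $$\min_{X\in\mathbf{F}^{d\times p}} f_p(X),\qquad f_p(X)=\|y-\mathcal{A}(XX^* )\|^2 .$$ Suppose that for some constants $\alpha,\beta,L\ge0$, for all $X\in\mathbf{F}^{d\times p}$, $$\tfrac1n\|\mathcal{A}(XX^*-x_*x_*^* )\|^2\ge\alpha\|XX^*-x_*x_*^*\|_F^2+\beta(\|X\|_F^2-\|x_*\|^2)^2,$$ and $$\tfrac1n\mathcal{A}^*\mathcal{A}(x_*x_*^* )\preceq L\|x_*\|^2 I_d .$$ If $(p+2)\left(1+\frac{\beta}{p\beta+\alpha}\right)\alpha>2L$, then every second-order critical point $X$ of $f_p$ satisfies $XX^*=x_*x_*^*$.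
   Context: $\mathbf{H}_d$ denotes the set of $d\times d$ Hermitian matrices over $\mathbf{F}$ with the (real) Frobenius inner product $\langle A,B\rangle=\operatorname{Re}\operatorname{tr}(A^*B)$. $\mathcal{A}:\mathbf{H}_d\to\mathbf{R}^n$ is $\mathcal{A}(S)=(\langle A_1,S\rangle,\dots,\langle A_n,S\rangle)$, with adjoint $\mathcal{A}^*(z)=\sum_iz_iA_i$. $\preceq$ is the positive semidefinite order. A second-order critical point is a point where the gradient is zero and the Hessian quadratic form is positive semidefinite; in the complex case the objective is regarded as a function of the real and imaginary parts of $X$. *)

From mathcomp Require Import all_boot all_order all_algebra.
From mathcomp Require Import complex.
From mathcomp Require Import all_classical all_reals all_analysis.
Set Implicit Arguments. Unset Strict Implicit. Unset Printing Implicit Defensive.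
Import Order.TTheory GRing.Theory Num.Theory.
Local Open Scope ring_scope.
Local Open Scope complex_scope.

(* The ground field F is encoded inside C = R[i]:
   cplx = true  : F = C,
   cplx = false : F = R, i.e. the elements of C with zero imaginary part.    *)
Definition inF (R : realType) (cplx : bool) (z : R[i]) : bool :=
  cplx || (complex.Im z == 0).

Definition mxF (R : realType) (cplx : bool) m n (M : 'M[R[i]]_(m, n)) : bool :=
  [forall i, forall j, inF cplx (M i j)].

Definition adj (R : realType) m n (M : 'M[R[i]]_(m, n)) : 'M[R[i]]_(n, m) :=
  (map_mx Num.conj M)^T.

Definition hermF (R : realType) (cplx : bool) d (A : 'M[R[i]]_d) : Prop :=
  mxF cplx A /\ adj A = A.

Definition psdF (R : realType) (cplx : bool) d (A : 'M[R[i]]_d) : Prop :=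
  hermF cplx A /\
  forall v : 'cV[R[i]]_d, mxF cplx v -> 0 <= (adj v *m A *m v) 0 0.

Definition frob (R : realType) m n (A B : 'M[R[i]]_(m, n)) : R :=
  complex.Re (\tr (adj A *m B)).

Definition fro2 (R : realType) m n (M : 'M[R[i]]_(m, n)) : R := frob M M.

Definition meas (R : realType) n d (As : 'I_n -> 'M[R[i]]_d) (S : 'M[R[i]]_d)
  : 'I_n -> R := fun k => frob (As k) S.

Definition meas_adj (R : realType) n d (As : 'I_n -> 'M[R[i]]_d) (z : 'I_n -> R)
  : 'M[R[i]]_d := \sum_(k < n) (z k)%:C *: As k.

Definition nrm2 (R : realType) n (z : 'I_n -> R) : R := \sum_(k < n) z k ^+ 2.

Definition fobj (R : realType) n d p (As : 'I_n -> 'M[R[i]]_d) (y : 'I_n -> R)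
  (X : 'M[R[i]]_(d, p)) : R :=
  nrm2 (fun k => y k - meas As (X *m adj X) k).

(* second-order critical point of f : F^{d x p} -> R, f viewed as a function
   of the real and imaginary parts of X (resp. of X itself if F = R):
   along every real line t |-> X + t U (U in F^{d x p}) the function is
   differentiable at 0 with zero derivative (gradient = 0) and its second
   derivative at 0 (the Hessian quadratic form at U) is nonnegative. *)
Definition second_order_critical (R : realType) (cplx : bool) d p
  (f : 'M[R[i]]_(d, p) -> R) (X : 'M[R[i]]_(d, p)) : Prop :=
  mxF cplx X /\
  forall U : 'M[R[i]]_(d, p), mxF cplx U ->
    let g := fun t : R => f (X + t%:C *: U) in
    [/\ derivable g 0 1, derive1 g 0 = 0,
        derivable (derive1 g) 0 1 & 0 <= derive1 (derive1 g) 0].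

From mathcomp Require Import all_boot all_order all_algebra.
From mathcomp Require Import complex.
From mathcomp Require Import all_classical all_reals all_analysis.
From mathcomp Require Import ring lra.
Import Order.TTheory GRing.Theory Num.Theory.
Local Open Scope ring_scope.
Local Open Scope complex_scope.
Set Implicit Arguments. Unset Strict Implicit. Unset Printing Implicit Defensive.

(* Let r = y - A(X X^* ) be the residual at a second-order critical point X, so that
   f(X) = |r|^2, and let S = A^*(r).  With w = X^* x / |x|^2 and v = x - X w, the
   first-order conditions in the directions X, x w^* and X w w^* give
   f(X) = <S, x x^*> = <S, v v^*>, and the second-order conditions in the p directions
   v e_j^T, with Cauchy-Schwarz for the PSD A_k, give
     (p + 2) f(X) <= 2 <A^*A(x x^* ), v v^*> <= 2 n L |x|^2 |v|^2.
   On the other hand, Cauchy-Schwarz for the trace of X^*X - |x|^2 w w^* turns the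
   restricted isometry hypothesis into
     (1 + beta / (p beta + alpha)) alpha |x|^2 |v|^2 <= f(X) / n.
   Under the gap condition the two bounds force f(X) = 0, hence X X^* = x x^*. *)

Section Adjoint.
Variable R : realType.
Local Notation C := R[i].

Lemma adjmxM m n p (A : 'M[C]_(m, n)) (B : 'M[C]_(n, p)) :
  adj (A *m B) = adj B *m adj A.
Proof. by rewrite /adj map_mxM trmx_mul. Qed.

Lemma adjmxD m n (A B : 'M[C]_(m, n)) : adj (A + B) = adj A + adj B.
Proof. by rewrite /adj map_mxD linearD. Qed.

Lemma adjmxN m n (A : 'M[C]_(m, n)) : adj (- A) = - adj A.
Proof. by rewrite /adj map_mxN linearN. Qed.

Lemma adjmxB m n (A B : 'M[C]_(m, n)) : adj (A - B) = adj A - adj B.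
Proof. by rewrite adjmxD adjmxN. Qed.

Lemma adjmxK m n (A : 'M[C]_(m, n)) : adj (adj A) = A.
Proof. by apply/matrixP => i j; rewrite !mxE conjCK. Qed.

Lemma adjmxZ m n (r : R) (A : 'M[C]_(m, n)) : adj (r%:C *: A) = r%:C *: adj A.
Proof.
by apply/matrixP => i j; rewrite !mxE rmorphM; congr (_ * _); exact: conjc_real.
Qed.

Lemma adjmx1 m : adj (1%:M : 'M[C]_m) = 1%:M.
Proof. by rewrite /adj map_scalar_mx rmorph1 tr_scalar_mx. Qed.

Lemma adjmx_delta m n i j : adj (delta_mx i j : 'M[C]_(m, n)) = delta_mx j i.
Proof. by rewrite /adj map_delta_mx ?rmorph0 ?rmorph1 // trmx_delta. Qed.

Lemma mxtrace_adj n (A : 'M[C]_n) : \tr (adj A) = Num.conj (\tr A).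
Proof.
by rewrite /adj mxtrace_tr /mxtrace rmorph_sum; apply: eq_bigr => i _; rewrite mxE.
Qed.

Lemma mulmx_adj_sum_col m p (X : 'M[C]_(m, p)) :
  X *m adj X = \sum_j col j X *m adj (col j X).
Proof.
under eq_bigr do rewrite colE adjmxM adjmx_delta mulmxA -(mulmxA X) mul_delta_mx.
by rewrite -mulmx_suml -mulmx_sumr -mx1_sum_delta mulmx1.
Qed.

End Adjoint.

Lemma quadratic_ge0_discr (R : realFieldType) (a b c : R) :
  0 <= c -> (forall s, 0 <= a + s * b + s ^+ 2 * c) -> b ^+ 2 <= 4 * a * c.
Proof.
move=> c_ge0 q_ge0; have [c0|c_neq0] := eqVneq c 0.
  have [b0|b_neq0] := eqVneq b 0; first by rewrite b0 c0 expr0n mulr0.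
  have := q_ge0 (- (a + 1) / b).
  by rewrite c0 mulr0 addr0 mulrAC -mulrA divff // mulr1; lra.
have c_gt0 : 0 < c by rewrite lt_def c_neq0.
have := q_ge0 (- b / (2 * c)).
have -> : a + - b / (2 * c) * b + (- b / (2 * c)) ^+ 2 * c = a - b ^+ 2 / (4 * c).
  by field; rewrite c_neq0.
by rewrite subr_ge0 ler_pdivrMr ?mulrA 1?(mulrC a) //; lra.
Qed.

Section Frobenius.
Variable R : realType.
Local Notation C := R[i].

Lemma frobC m n (A B : 'M[C]_(m, n)) : frob A B = frob B A.
Proof. by rewrite /frob -[in RHS](adjmxK A) -adjmxM mxtrace_adj; case: (\tr _). Qed.

Lemma frobDr m n (A B D : 'M[C]_(m, n)) : frob A (B + D) = frob A B + frob A D.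
Proof. by rewrite /frob mulmxDr mxtraceD raddfD. Qed.

Lemma frobNr m n (A B : 'M[C]_(m, n)) : frob A (- B) = - frob A B.
Proof. by rewrite /frob mulmxN linearN raddfN. Qed.

Lemma frobBr m n (A B D : 'M[C]_(m, n)) : frob A (B - D) = frob A B - frob A D.
Proof. by rewrite frobDr frobNr. Qed.

Lemma frobZr m n (r : R) (A B : 'M[C]_(m, n)) : frob A (r%:C *: B) = r * frob A B.
Proof.
by rewrite /frob -scalemxAr mxtraceZ; case: (\tr _) => a b /=; rewrite mul0r subr0.
Qed.

Lemma frob_sumr m n (I : finType) (A : 'M[C]_(m, n)) (F : I -> 'M[C]_(m, n)) :
  frob A (\sum_i F i) = \sum_i frob A (F i).
Proof.
apply: (big_morph _ (@frobDr m n A)).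
by rewrite /frob mulmx0 mxtrace0.
Qed.

Lemma frobDl m n (A B D : 'M[C]_(m, n)) : frob (B + D) A = frob B A + frob D A.
Proof. by rewrite frobC frobDr !(frobC A). Qed.

Lemma frobBl m n (A B D : 'M[C]_(m, n)) : frob (B - D) A = frob B A - frob D A.
Proof. by rewrite frobC frobBr !(frobC A). Qed.

Lemma frobZl m n (r : R) (A B : 'M[C]_(m, n)) : frob (r%:C *: B) A = r * frob B A.
Proof. by rewrite frobC frobZr frobC. Qed.

Lemma frob_suml m n (I : finType) (A : 'M[C]_(m, n)) (F : I -> 'M[C]_(m, n)) :
  frob (\sum_i F i) A = \sum_i frob (F i) A.
Proof. by rewrite frobC frob_sumr; apply: eq_bigr => i _; rewrite frobC. Qed.

Lemma frobMl m n p (A : 'M[C]_(m, n)) (B : 'M[C]_(n, p)) (D : 'M[C]_(m, p)) :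
  frob (A *m B) D = frob B (adj A *m D).
Proof. by rewrite /frob adjmxM mulmxA. Qed.

Lemma frobMr m n p (A : 'M[C]_(m, n)) (B : 'M[C]_(n, p)) (D : 'M[C]_(m, p)) :
  frob (A *m B) D = frob A (D *m adj B).
Proof. by rewrite /frob adjmxM -mulmxA mxtrace_mulC mulmxA. Qed.

Lemma frob1l n (M : 'M[C]_n) : frob 1%:M M = complex.Re (\tr M).
Proof. by rewrite /frob adjmx1 mul1mx. Qed.

Lemma fro2E m n (A : 'M[C]_(m, n)) :
  fro2 A = \sum_j \sum_i (complex.Re (A i j) ^+ 2 + complex.Im (A i j) ^+ 2).
Proof.
rewrite /fro2 /frob /mxtrace raddf_sum; apply: eq_bigr => j _.
rewrite mxE raddf_sum; apply: eq_bigr => i _; rewrite !mxE.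
by case: (A i j) => a b /=; rewrite !expr2 mulNr opprK.
Qed.

Lemma fro2_ge0 m n (A : 'M[C]_(m, n)) : 0 <= fro2 A.
Proof.
rewrite fro2E; apply: sumr_ge0 => j _; apply: sumr_ge0 => i _.
by rewrite addr_ge0 ?sqr_ge0.
Qed.

Lemma fro2_eq0 m n (A : 'M[C]_(m, n)) : fro2 A = 0 -> A = 0.
Proof.
have sq_ge0 (z : C) : 0 <= complex.Re z ^+ 2 + complex.Im z ^+ 2.
  by rewrite addr_ge0 ?sqr_ge0.
rewrite fro2E => /eqP; rewrite psumr_eq0 => [/allP A0|j _]; last first.
  by apply: sumr_ge0 => i _.
apply/matrixP => i j; rewrite mxE.
move: (A0 j (mem_index_enum _)) => /implyP /(_ isT).
rewrite psumr_eq0 // => /allP /(_ i (mem_index_enum _)) /implyP /(_ isT).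
rewrite paddr_eq0 ?sqr_ge0 // !sqrf_eq0.
by case: (A i j) => a b /andP[/eqP /= -> /eqP /= ->].
Qed.

Lemma frob_CS m n (A B : 'M[C]_(m, n)) : frob A B ^+ 2 <= fro2 A * fro2 B.
Proof.
have /quadratic_ge0_discr :
    forall s, 0 <= fro2 A + s * (2 * frob A B) + s ^+ 2 * fro2 B.
  move=> s; have := fro2_ge0 (A + s%:C *: B).
  rewrite /fro2 frobDl !frobDr !frobZl !frobZr (frobC B A).
  by move: (frob A A) (frob A B) (frob B B) => a b c; lra.
move=> /(_ (fro2_ge0 B)); rewrite exprMn.
by move: (frob A B) (fro2 A) (fro2 B) => a b c; lra.
Qed.

Lemma mxtrace_sqr_le n (K : 'M[C]_n) : complex.Re (\tr K) ^+ 2 <= n%:R * fro2 K.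
Proof.
have fro2_1 : fro2 (1%:M : 'M[C]_n) = n%:R.
  by rewrite /fro2 frob1l mxtrace1 -[n%:R]/((1 : C) *+ n) raddfMn.
by rewrite -frob1l -fro2_1 frob_CS.
Qed.

Lemma adj_mulmx_col n (v : 'cV[C]_n) : adj v *m v = (fro2 v)%:C%:M.
Proof.
apply/matrixP => i j; rewrite !ord1 /fro2 /frob /mxtrace big_ord1 !mxE eqxx mulr1n.
apply/eqP; rewrite eq_complex /= eqxx raddf_sum /=; apply/eqP/big1 => k _.
by rewrite !mxE; case: (v k 0) => a b /=; rewrite mulNr mulrC subrr.
Qed.

Lemma frob_rank1_rank1 n (x : 'cV[C]_n) :
  frob (x *m adj x) (x *m adj x) = fro2 x ^+ 2.
Proof.
by rewrite frobMr adjmxK -mulmxA adj_mulmx_col mul_mx_scalar frobZr expr2.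
Qed.

Lemma frob1_rank1 n (x : 'cV[C]_n) : frob 1%:M (x *m adj x) = fro2 x.
Proof. by rewrite frob1l mxtrace_mulC. Qed.

Lemma frob_gram_rank1 m n (A : 'M[C]_(m, n)) (x : 'cV[C]_m) :
  frob (A *m adj A) (x *m adj x) = fro2 (adj A *m x).
Proof. by rewrite frobMl mulmxA -frobMr. Qed.

Lemma frob_adj_gram_rank1 m n (A : 'M[C]_(m, n)) (x : 'cV[C]_n) :
  frob (adj A *m A) (x *m adj x) = fro2 (A *m x).
Proof. by rewrite -{2}(adjmxK A) frob_gram_rank1 adjmxK. Qed.

Lemma frob_gram_adj m n (X : 'M[C]_(m, n)) :
  frob (X *m adj X) (X *m adj X) = frob (adj X *m X) (adj X *m X).
Proof. by rewrite frobMl mulmxA -frobMr. Qed.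

End Frobenius.

Section GroundField.
Variables (R : realType) (cplx : bool).
Local Notation C := R[i].

Lemma inF_real (r : R) : inF cplx r%:C.
Proof. by rewrite /inF eqxx orbT. Qed.

Lemma inFD (a b : C) : inF cplx a -> inF cplx b -> inF cplx (a + b).
Proof.
by rewrite /inF; case: cplx => //= /eqP ha /eqP hb; rewrite raddfD /= ha hb addr0.
Qed.

Lemma inFN (a : C) : inF cplx a -> inF cplx (- a).
Proof. by rewrite /inF; case: cplx => //= /eqP ha; rewrite raddfN /= ha oppr0. Qed.

Lemma inFM (a b : C) : inF cplx a -> inF cplx b -> inF cplx (a * b).
Proof.
rewrite /inF; case: cplx => //; case: a => a1 a2; case: b => b1 b2 /=.
by move=> /eqP -> /eqP ->; rewrite !mulr0 !mul0r addr0.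
Qed.

Lemma inF_conj (a : C) : inF cplx a -> inF cplx (Num.conj a).
Proof.
by rewrite /inF; case: cplx => //; case: a => a1 a2 /= /eqP ->; rewrite oppr0.
Qed.

Lemma mxFP m n (M : 'M[C]_(m, n)) :
  reflect (forall i j, inF cplx (M i j)) (mxF cplx M).
Proof.
apply: (iffP forallP) => [H i j | H i]; first exact: (forallP (H i)).
by apply/forallP => j.
Qed.

Lemma mxFD m n (A B : 'M[C]_(m, n)) : mxF cplx A -> mxF cplx B -> mxF cplx (A + B).
Proof. by move=> /mxFP hA /mxFP hB; apply/mxFP => i j; rewrite mxE inFD. Qed.

Lemma mxFB m n (A B : 'M[C]_(m, n)) : mxF cplx A -> mxF cplx B -> mxF cplx (A - B).
Proof. by move=> /mxFP hA /mxFP hB; apply/mxFP => i j; rewrite !mxE inFD ?inFN. Qed.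

Lemma mxFM m n p (A : 'M[C]_(m, n)) (B : 'M[C]_(n, p)) :
  mxF cplx A -> mxF cplx B -> mxF cplx (A *m B).
Proof.
move=> /mxFP hA /mxFP hB; apply/mxFP => i j; rewrite mxE.
by apply: (big_ind (inF cplx)) => [|a b|k _];
  [exact: (inF_real 0) | exact: inFD | exact: inFM].
Qed.

Lemma mxF_adj m n (A : 'M[C]_(m, n)) : mxF cplx A -> mxF cplx (adj A).
Proof. by move=> /mxFP hA; apply/mxFP => i j; rewrite !mxE inF_conj. Qed.

Lemma mxFZ m n (r : R) (A : 'M[C]_(m, n)) : mxF cplx A -> mxF cplx (r%:C *: A).
Proof. by move=> /mxFP hA; apply/mxFP => i j; rewrite mxE inFM ?inF_real. Qed.

Lemma mxF_delta m n i0 j0 : mxF cplx (delta_mx i0 j0 : 'M[C]_(m, n)).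
Proof.
apply/mxFP => i j; rewrite mxE.
by case: (_ && _); [exact: (inF_real 1) | exact: (inF_real 0)].
Qed.

End GroundField.

Section Psd.
Variables (R : realType) (cplx : bool) (d : nat).
Local Notation C := R[i].
Variable A : 'M[C]_d.
Hypothesis A_psd : psdF cplx A.

Lemma psd_frob_ge0 (v : 'cV[C]_d) : mxF cplx v -> 0 <= frob A (v *m adj v).
Proof.
case: A_psd => [[_ A_herm] qA] /(qA v); rewrite lecE /= => /andP[_].
by rewrite /frob A_herm mulmxA mxtrace_mulC mulmxA /mxtrace big_ord1.
Qed.

Lemma psd_frob_CS (v w : 'cV[C]_d) : mxF cplx v -> mxF cplx w ->
  frob A (w *m adj v + v *m adj w) ^+ 2
    <= 4 * frob A (v *m adj v) * frob A (w *m adj w).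
Proof.
move=> vF wF; apply: quadratic_ge0_discr => [|s]; first exact: psd_frob_ge0.
have := psd_frob_ge0 (mxFD vF (mxFZ s wF)).
rewrite adjmxD adjmxZ mulmxDl !mulmxDr -!scalemxAl -!scalemxAr.
rewrite !frobDr !frobZr expr2.
move: (frob A (v *m adj v)) (frob A (v *m adj w)) (frob A (w *m adj v)).
by move: (frob A (w *m adj w)) => e a b c; lra.
Qed.

End Psd.

Lemma escape_scalar_bound (R : realFieldType) (al be P nu a1 a2 T t : R) :
  0 < al -> 0 <= be -> 1 <= P ->
  (t - nu * a1) ^+ 2 <= P * (T - 2 * nu * a2 + nu ^+ 2 * a1 ^+ 2) ->
  (nu * a1) ^+ 2 <= nu * a2 ->
  (1 + be / (P * be + al)) * al * (nu * (nu - 2 * nu * a1 + a2))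
    <= al * (T - 2 * (nu ^+ 2 * a1) + nu ^+ 2) + be * (t - nu) ^+ 2.
Proof.
move=> al_gt0 be_ge0 P_ge1 trace_CS vec_CS.
have P_gt0 : 0 < P by lra.
have Pbe_ge0 : 0 <= P * be by rewrite mulr_ge0 // ltW.
have be_le_Pbe : be <= P * be by rewrite -{1}(mul1r be) ler_wpM2r.
pose D := P * be + al; pose k := al * be / D.
pose tau := t - nu * a1; pose e := nu * (a1 - 1).
(* With this [k], the difference of the two sides splits into the trace bound, the
   nonnegative [(al - k) (nu a2 - (nu a1)^2)] and a perfect square in [tau]. *)
have D_gt0 : 0 < D by rewrite /D; lra.
have k_le_al : k <= al.
  by rewrite /k ler_pdivrMr // ler_pM2l // /D; lra.
have k_ge0 : 0 <= k by rewrite /k divr_ge0 ?mulr_ge0 // ltW.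
have trace_term : al * tau ^+ 2 / P <= al * (T - 2 * nu * a2 + nu ^+ 2 * a1 ^+ 2).
  by rewrite ler_pdivrMr // -[al * _ * P]mulrA ler_pM2l // [_ * P]mulrC.
have square : al * tau ^+ 2 / P + be * (tau + e) ^+ 2 - k * e ^+ 2
              = (D * tau + P * be * e) ^+ 2 / (P * D).
  by rewrite /k /D /tau /e; field; rewrite -/D !gt_eqF.
have square_ge0 : 0 <= (D * tau + P * be * e) ^+ 2 / (P * D).
  by rewrite divr_ge0 ?sqr_ge0 ?mulr_ge0 ?ltW.
have vec_term : 0 <= (al - k) * (nu * a2 - (nu * a1) ^+ 2).
  by rewrite mulr_ge0 // subr_ge0.
have -> : (1 + be / D) * al = al + k by rewrite /k; field; rewrite gt_eqF.
have -> : al * (T - 2 * (nu ^+ 2 * a1) + nu ^+ 2) + be * (t - nu) ^+ 2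
   = (al + k) * (nu * (nu - 2 * nu * a1 + a2))
     + (al * (T - 2 * nu * a2 + nu ^+ 2 * a1 ^+ 2) - al * tau ^+ 2 / P)
     + (al - k) * (nu * a2 - (nu * a1) ^+ 2)
     + (al * tau ^+ 2 / P + be * (tau + e) ^+ 2 - k * e ^+ 2)
  by rewrite /tau /e; ring.
by rewrite square; lra.
Qed.

Section EscapeDirection.
Variable R : realType.
Local Notation C := R[i].

Definition escape_coef d p (X : 'M[C]_(d, p)) (x : 'cV[C]_d) : 'cV[C]_p :=
  (fro2 x)^-1%:C *: (adj X *m x).

Definition escape_dir d p (X : 'M[C]_(d, p)) (x : 'cV[C]_d) : 'cV[C]_d :=
  x - X *m escape_coef X x.

Lemma mxF_escape_dir cplx d p (X : 'M[C]_(d, p)) (x : 'cV[C]_d) :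
  mxF cplx X -> mxF cplx x -> mxF cplx (escape_dir X x).
Proof.
move=> XF xF; apply: mxFB => //; apply: mxFM => //.
by apply: mxFZ; apply: mxFM => //; apply: mxF_adj.
Qed.

Lemma escape_dir_lower_bound d p (X : 'M[C]_(d, p)) (x : 'cV[C]_d) (al be : R) :
  0 < al -> 0 <= be -> (1 <= p)%N ->
  (1 + be / (p%:R * be + al)) * al * (fro2 x * fro2 (escape_dir X x))
    <= al * fro2 (X *m adj X - x *m adj x) + be * (fro2 X - fro2 x) ^+ 2.
Proof.
move=> al_gt0 be_ge0 p_ge1.
set nu := fro2 x; set w := escape_coef X x.
have [nu0|nu_neq0] := eqVneq nu 0.
  rewrite nu0 mul0r mulr0; apply: addr_ge0; apply: mulr_ge0;
  by rewrite ?fro2_ge0 ?sqr_ge0 // ltW.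
set a1 := fro2 w; set a2 := fro2 (X *m w).
set T := frob (adj X *m X) (adj X *m X).
have Xx : adj X *m x = nu%:C *: w.
  by rewrite /w /escape_coef scalerA -rmorphM /= divff // scale1r.
have x_Xw : frob x (X *m w) = nu * a1.
  by rewrite frobC frobMl Xx frobZr.
have fro2_v : fro2 (escape_dir X x) = nu - 2 * nu * a1 + a2.
  rewrite /fro2 frobBl !frobBr x_Xw (frobC (X *m w)) x_Xw -/(fro2 x) -/nu -/a2.
  ring.
have fro2_diff : fro2 (X *m adj X - x *m adj x) = T - 2 * (nu ^+ 2 * a1) + nu ^+ 2.
  rewrite /fro2 frobBl !frobBr frob_gram_adj frob_rank1_rank1 (frobC (x *m adj x)).
  rewrite frob_gram_rank1 Xx /fro2 frobZl frobZr -/a1 -/T -/nu; ring.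
pose K := adj X *m X - nu%:C *: (w *m adj w).
have tr_K : complex.Re (\tr K) = fro2 X - nu * a1.
  by rewrite -frob1l /K frobBr frobZr frob1_rank1 frob1l.
have fro2_K : fro2 K = T - 2 * nu * a2 + nu ^+ 2 * a1 ^+ 2.
  rewrite /fro2 /K frobBl !frobBr !frobZl !frobZr frob_rank1_rank1.
  rewrite (frobC (w *m adj w)) frob_adj_gram_rank1 -/T -/a2 -/a1; ring.
have trace_CS := mxtrace_sqr_le K.
rewrite tr_K fro2_K in trace_CS.
have vec_CS := frob_CS x (X *m w).
rewrite x_Xw -/nu -/a2 in vec_CS.
by rewrite fro2_v fro2_diff escape_scalar_bound ?ler1n.
Qed.

End EscapeDirection.

Lemma nrm2_ge0 (R : realType) n (z : 'I_n -> R) : 0 <= nrm2 z.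
Proof. by apply: sumr_ge0 => k _; rewrite sqr_ge0. Qed.

Lemma derive1_sum_sqr_quadratic (R : realType) n (e b c : 'I_n -> R) (g : R -> R) :
  (forall t, g t = \sum_k (e k - t * b k - t ^+ 2 * c k) ^+ 2) ->
  derive1 g 0 = - 2 * \sum_k e k * b k /\
  derive1 (derive1 g) 0 = 2 * \sum_k (b k ^+ 2 - 2 * e k * c k).
Proof.
move=> gE.
pose P : {poly R} := \sum_k ((e k)%:P - b k *: 'X - c k *: 'X^2) ^+ 2.
have -> : g = horner P.
  apply: funext => t; rewrite gE /P horner_sum; apply: eq_bigr => k _.
  by rewrite horner_exp !(hornerD, hornerN, hornerZ, hornerC, hornerX, hornerXn); ring.
rewrite -!derive.derivE !horner_coef0 !coef_deriv /P !coef_sum.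
split; [rewrite mulr_sumr | rewrite mulr1n mulr_sumr -sumrMnl]; apply: eq_bigr => k _;
  by rewrite expr2 coefM !big_ord_recr big_ord0 /= !coefE /=; ring.
Qed.

Section Measurements.
Variables (R : realType) (n d : nat) (As : 'I_n -> 'M[R[i]]_d).

Definition resid p (y : 'I_n -> R) (X : 'M[R[i]]_(d, p)) (k : 'I_n) : R :=
  y k - meas As (X *m adj X) k.

Lemma frob_meas_adj (z : 'I_n -> R) (M : 'M[R[i]]_d) :
  frob (meas_adj As z) M = \sum_k z k * meas As M k.
Proof. by rewrite /meas_adj frob_suml; apply: eq_bigr => k _; rewrite frobZl. Qed.

Lemma meas_line p (X U : 'M[R[i]]_(d, p)) (t : R) k :
  meas As ((X + t%:C *: U) *m adj (X + t%:C *: U)) k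
  = meas As (X *m adj X) k + t * meas As (X *m adj U + U *m adj X) k
    + t ^+ 2 * meas As (U *m adj U) k.
Proof.
rewrite /meas adjmxD adjmxZ mulmxDl !mulmxDr -!scalemxAl -!scalemxAr.
rewrite !frobDr !frobZr.
move: (frob (As k) _) (frob (As k) _) (frob (As k) _) (frob (As k) _).
by move=> a b c e; ring.
Qed.

Lemma critical_conditions cplx p (y : 'I_n -> R) (X U : 'M[R[i]]_(d, p)) :
  second_order_critical cplx (fobj As y) X -> mxF cplx U ->
  frob (meas_adj As (resid y X)) (X *m adj U + U *m adj X) = 0 /\
  2 * frob (meas_adj As (resid y X)) (U *m adj U)
    <= nrm2 (meas As (X *m adj U + U *m adj X)).
Proof.
move=> [_ X_crit] UF; have [_ grad0 _ hess_ge0] := X_crit U UF.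
set b := meas As (X *m adj U + U *m adj X); set c := meas As (U *m adj U).
have fobj_line t : fobj As y (X + t%:C *: U)
    = \sum_k (resid y X k - t * b k - t ^+ 2 * c k) ^+ 2.
  by apply: eq_bigr => k _; rewrite meas_line /resid !opprD !addrA.
have [gradE hessE] := derive1_sum_sqr_quadratic fobj_line.
rewrite !frob_meas_adj; split.
  by move: grad0; rewrite gradE; lra.
move: hess_ge0; rewrite hessE /nrm2 sumrB mulr_sumr.
under [X in _ - X]eq_bigr do rewrite -mulrA.
lra.
Qed.

Lemma fobj_meas_sub p (Y : 'M[R[i]]_d) (X : 'M[R[i]]_(d, p)) :
  fobj As (meas As Y) X = nrm2 (meas As (X *m adj X - Y)).
Proof. by apply: eq_bigr => k _; rewrite /meas frobBr -sqrrN opprB. Qed.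

End Measurements.

Section CriticalPoint.
Variables (R : realType) (cplx : bool) (d n p : nat).
Variables (As : 'I_n -> 'M[R[i]]_d) (xs : 'cV[R[i]]_d) (X : 'M[R[i]]_(d, p)).
Hypothesis As_psd : forall k, psdF cplx (As k).
Hypothesis xs_F : mxF cplx xs.
Hypothesis X_crit : second_order_critical cplx (fobj As (meas As (xs *m adj xs))) X.

Local Notation y := (meas As (xs *m adj xs)).
Local Notation S := (meas_adj As (resid As y X)).
Local Notation v := (escape_dir X xs).

Let X_F : mxF cplx X := X_crit.1.

Lemma critical_resid_gram : frob S (X *m adj X) = 0.
Proof. by have [] := critical_conditions X_crit X_F; rewrite frobDr; lra. Qed.

Lemma critical_fobj_resid : fobj As y X = frob S (xs *m adj xs).
Proof.
rewrite -[RHS]subr0 -critical_resid_gram -frobBr frob_meas_adj.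
by apply: eq_bigr => k _; rewrite /meas frobBr expr2.
Qed.

(* [v v^* = x x^* - (m x^* + x m^* ) + m m^*] with [m = X w], and the first-order
   conditions in the directions [x w^*] and [X w w^*] kill the last two terms. *)
Lemma critical_resid_escape : frob S (v *m adj v) = frob S (xs *m adj xs).
Proof.
set w := escape_coef X xs; set m := X *m w.
have w_F : mxF cplx w by rewrite mxFZ // mxFM // mxF_adj.
have [grad1 _] := critical_conditions X_crit (mxFM xs_F (mxF_adj w_F)).
have [grad2 _] := critical_conditions X_crit (mxFM (mxFM X_F w_F) (mxF_adj w_F)).
rewrite -/m in grad2.
rewrite adjmxM adjmxK mulmxA -(mulmxA xs) -adjmxM -/m frobDr in grad1.
rewrite adjmxM adjmxK mulmxA -(mulmxA m) -adjmxM -/m frobDr in grad2.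
rewrite /escape_dir -/w -/m adjmxB mulmxBl !mulmxBr !frobBr.
move: (frob S (xs *m adj m)) (frob S (m *m adj xs)) (frob S (m *m adj m)) grad1 grad2.
by move=> a b c; lra.
Qed.

(* Second-order condition in the directions [v e_j^T], whose Hessian terms are bounded
   by Cauchy-Schwarz for the PSD [A_k]; the columns of [X] then add up to [X X^*]. *)
Lemma critical_escape_hessian :
  (2 * frob S (v *m adj v)) *+ p
    <= 4 * \sum_k meas As (v *m adj v) k * meas As (X *m adj X) k.
Proof.
have v_F : mxF cplx v := mxF_escape_dir X_F xs_F.
have col_F j : mxF cplx (col j X) by rewrite colE mxFM ?mxF_delta.
have col_bound j : 2 * frob S (v *m adj v)
    <= 4 * \sum_k meas As (v *m adj v) k * meas As (col j X *m adj (col j X)) k.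
  pose U := v *m (delta_mx 0 j : 'M[R[i]]_(1, p)).
  have U_F : mxF cplx U by rewrite mxFM ?mxF_delta.
  have [_ hess] := critical_conditions X_crit U_F.
  have UU : U *m adj U = v *m adj v.
    rewrite /U adjmxM adjmx_delta mulmxA -(mulmxA v) mul_delta_mx.
    rewrite (_ : delta_mx 0 0 = 1%:M :> 'M[R[i]]_1) ?mulmx1 //.
    by apply/matrixP => a b; rewrite !ord1 !mxE.
  have symU : X *m adj U + U *m adj X = col j X *m adj v + v *m adj (col j X).
    by rewrite /U !colE !adjmxM !adjmx_delta !mulmxA.
  rewrite UU symU in hess; apply: le_trans hess _; rewrite mulr_sumr.
  by apply: ler_sum => k _; rewrite mulrA; apply: (psd_frob_CS (As_psd k)).
have -> : (2 * frob S (v *m adj v)) *+ p = \sum_(j < p) 2 * frob S (v *m adj v).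
  by rewrite sumr_const card_ord.
apply: le_trans (ler_sum _ (fun j _ => col_bound j)) _.
rewrite -mulr_sumr exchange_big (mulmx_adj_sum_col X) /=.
by under [in X in _ <= _ * X]eq_bigr do rewrite /meas frob_sumr mulr_sumr.
Qed.

Lemma critical_fobj_bound :
  (p%:R + 2) * fobj As y X <= 2 * frob (meas_adj As y) (v *m adj v).
Proof.
have hess := critical_escape_hessian.
have cross : \sum_k meas As (v *m adj v) k * meas As (X *m adj X) k
          = frob (meas_adj As y) (v *m adj v) - frob S (v *m adj v).
  rewrite !frob_meas_adj -sumrB; apply: eq_bigr => k _; rewrite /resid.
  move: (y k) (meas As (X *m adj X) k) (meas As (v *m adj v) k) => a b c; ring.
rewrite cross -mulr_natr in hess; rewrite critical_fobj_resid -critical_resid_escape.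
move: (frob S _) (frob (meas_adj As y) _) hess => E Y; lra.
Qed.

Lemma critical_fobj_le (L : R) :
  psdF cplx ((L * fro2 xs)%:C *: 1%:M - (n%:R^-1)%:C *: meas_adj As y) ->
  (p%:R + 2) * (n%:R^-1 * fobj As y X) <= 2 * L * (fro2 xs * fro2 v).
Proof.
move=> /psd_frob_ge0 /(_ _ (mxF_escape_dir X_F xs_F)).
rewrite frobBl !frobZl frob1_rank1 subr_ge0 -!mulrA => meas_le.
rewrite mulrCA; apply: le_trans (ler_wpM2l _ critical_fobj_bound) _.
  by rewrite invr_ge0.
by rewrite mulrCA ler_pM2l.
Qed.

End CriticalPoint.

Lemma squeeze_le0 (R : realFieldType) (K c L E V Q : R) :
  0 <= c -> 0 <= L -> 0 <= E -> 2 * L < K * c ->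
  K * E <= 2 * L * V -> c * V <= Q -> Q <= E -> Q <= 0.
Proof.
move=> c_ge0 L_ge0 E_ge0 gap KE_le cVQ QE.
have : (K * c - 2 * L) * E <= 0 by nra.
by rewrite pmulr_rle0 ?subr_gt0 // => E_le0; lra.
Qed.

Theorem theorem2 (R : realType) (cplx : bool) (d n p : nat)
  (xs : 'cV[R[i]]_d) (As : 'I_n -> 'M[R[i]]_d) (alpha beta L : R) :
  mxF cplx xs ->
  (forall k, psdF cplx (As k)) ->
  (1 <= p)%N ->
  0 <= alpha -> 0 <= beta -> 0 <= L ->
  (forall X : 'M[R[i]]_(d, p), mxF cplx X ->
     n%:R^-1 * nrm2 (meas As (X *m adj X - xs *m adj xs))
       >= alpha * fro2 (X *m adj X - xs *m adj xs)
          + beta * (fro2 X - fro2 xs) ^+ 2) ->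
  psdF cplx ((L * fro2 xs)%:C *: 1%:M
             - (n%:R^-1)%:C *: meas_adj As (meas As (xs *m adj xs))) ->
  (p%:R + 2) * (1 + beta / (p%:R * beta + alpha)) * alpha > 2 * L ->
  forall X : 'M[R[i]]_(d, p),
    second_order_critical cplx (fobj As (meas As (xs *m adj xs))) X ->
    X *m adj X = xs *m adj xs.
Proof.
move=> xs_F As_psd p_ge1 alpha_ge0 beta_ge0 L_ge0 rip L_bound gap X X_crit.
have alpha_gt0 : 0 < alpha.
  by rewrite lt_def alpha_ge0 andbT; apply: contraTneq gap => ->; rewrite mulr0; lra.
have c_ge0 : 0 <= (1 + beta / (p%:R * beta + alpha)) * alpha.
  by rewrite mulr_ge0 // addr_ge0 // divr_ge0 // addr_ge0 // mulr_ge0.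
have fobj_ge0 : 0 <= n%:R^-1 * fobj As (meas As (xs *m adj xs)) X.
  by rewrite mulr_ge0 ?invr_ge0 ?nrm2_ge0.
have upper := critical_fobj_le As_psd xs_F X_crit L_bound.
have lower := escape_dir_lower_bound X xs alpha_gt0 beta_ge0 p_ge1.
have fit := rip X X_crit.1; rewrite -fobj_meas_sub in fit.
rewrite -mulrA in gap.
have := squeeze_le0 c_ge0 L_ge0 fobj_ge0 gap upper lower fit.
move=> Q_le0; apply/eqP; rewrite -subr_eq0; apply/eqP/fro2_eq0/le_anti.
rewrite fro2_ge0 andbT -(pmulr_rle0 _ alpha_gt0); apply: le_trans Q_le0.
by rewrite lerDl mulr_ge0 ?sqr_ge0.
Qed.
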